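(* Let $1\leq e_1\leq\cdots\leq e_m$ be integers, let $b_i$ be integers with $0\leq b_i\leq e_i-1$ for $i=1,\ldots,m$, and let $b_0\geq1$ be an integer. Then for every $k=0,\ldots,m-1$, $$\prod_{i=1}^m(e_i-b_i)\geq\Big(\sum_{i=1}^{k+1}(e_i-b_i)-(k-1)-b_0-\sum_{i=k+2}^m b_i\Big)e_{k+2}\cdots e_m,$$ where for $k=m-1$ the product $e_{k+2}\cdots e_m$ is $1$ and the sum $\sum_{i=k+2}^m b_i$ is $0$. *)

From mathcomp Require Import all_boot all_order all_algebra.

From mathcomp Require Import all_boot all_order all_algebra.
From mathcomp Require Import ring lra.
Import Order.TTheory GRing.Theory Num.Theory.
Local Open Scope ring_scope.

(* Put x_i = e_i - b_i - 1 for i <= k+1 and y_j = e_j - 1, d_j = b_j for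
   j >= k+2.  As b_0 >= 1, it suffices that
     (1 + sum x - sum d) * prod (1 + y) <= prod (1 + x) * prod (1 + y - d)
   whenever x_i >= 0, 0 <= d_j <= y_j and x_i <= y_j (monotonicity of e).
   Both sides are affine in each d_j, so only d_j = 0 (where the factor
   1 + y_j cancels) and d_j = y_j matter; all d_j = y_j is the inequality
   (1 + sum x - sum y) * prod (1 + y) <= prod (1 + x). *)

Section ProductBounds.

Variable R : realDomainType.
Implicit Types (xs ys : seq R) (a c t u : R).

Lemma affine_ge0_interval a c t u :
  0 <= t <= u -> 0 <= a -> 0 <= a + c * u -> 0 <= a + c * t.
Proof.
move=> /andP[t_ge0 t_le_u] a_ge0 acu_ge0.
have [c_ge0|c_lt0] := lerP 0 c; first by rewrite addr_ge0 // mulr_ge0.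
by apply: le_trans acu_ge0 _; rewrite lerD2l ler_wnM2l // ltW.
Qed.

Lemma sum_seq_ge0 {xs} : all (>= 0) xs -> 0 <= \sum_(x <- xs) x.
Proof. by move=> /allP xs_ge0; rewrite big_seq; apply: sumr_ge0. Qed.

Lemma prod1D_ge0 {xs} : all (>= 0) xs -> 0 <= \prod_(x <- xs) (1 + x).
Proof.
by move=> /allP xs_ge0; rewrite big_seq; apply: prodr_ge0 => x /xs_ge0; lra.
Qed.

Lemma one_subr_sum_prod1D_le1 ys :
  all (>= 0) ys -> (1 - \sum_(y <- ys) y) * \prod_(y <- ys) (1 + y) <= 1.
Proof.
elim: ys => [|y ys IH] /= => [_|/andP[y_ge0 ys_ge0]].
  by rewrite !big_nil subr0 mulr1.
rewrite !big_cons; have := IH ys_ge0.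
have := sum_seq_ge0 ys_ge0; have := prod1D_ge0 ys_ge0.
set S := \sum_(_ <- _) _; set P := \prod_(_ <- _) _ => P_ge0 S_ge0 IHys.
have : 0 <= y * (y + S) * P by rewrite !mulr_ge0 //; lra.
nra.
Qed.

(* If [sum ys <= sum xs] the head [x] of [xs] is dropped alone, otherwise it
   is dropped together with the head [y >= x] of [ys]. *)
Lemma sum_gap_prod1D_le xs ys :
  all (>= 0) xs -> all (>= 0) ys -> allrel <=%R xs ys ->
  (1 + \sum_(x <- xs) x - \sum_(y <- ys) y) * \prod_(y <- ys) (1 + y)
    <= \prod_(x <- xs) (1 + x).
Proof.
elim: xs ys => [|x xs IH] ys /=.
  by move=> _ ys_ge0 _; rewrite !big_nil addr0; apply: one_subr_sum_prod1D_le1.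
move=> /andP[x_ge0 xs_ge0] ys_ge0; rewrite allrel_consl => /andP[x_le_ys xs_le_ys].
rewrite !big_cons; have := sum_seq_ge0 xs_ge0; have := prod1D_ge0 xs_ge0.
set S := \sum_(_ <- xs) _; set P := \prod_(_ <- xs) _ => P_ge0 S_ge0.
have [T_le_S|S_lt_T] := lerP (\sum_(y <- ys) y) S.
  have IHys := IH ys xs_ge0 ys_ge0 xs_le_ys; have := prod1D_ge0 ys_ge0.
  rewrite -/S -/P in IHys; move: IHys.
  set T := \sum_(_ <- _) _ in T_le_S *; set K := \prod_(_ <- _) _ => IHys K_ge0.
  have : 0 <= x * (S - T) * K by rewrite !mulr_ge0 //; lra.
  have : 0 <= (1 + x) * (P - (1 + S - T) * K) by rewrite mulr_ge0 //; lra.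
  nra.
case: ys ys_ge0 x_le_ys xs_le_ys S_lt_T => [|y ys]; first by rewrite big_nil; lra.
rewrite /= allrel_consr => /andP[y_ge0 ys_ge0] /andP[x_le_y _] /andP[_ xs_le_ys].
have IHys := IH ys xs_ge0 ys_ge0 xs_le_ys; rewrite -/S -/P in IHys.
rewrite !big_cons; move: IHys; have := prod1D_ge0 ys_ge0.
set T := \sum_(_ <- _) _; set K := \prod_(_ <- _) _ => K_ge0 IHys S_lt_T.
have : 0 <= (y - x) * (y + T - S) * K by rewrite !mulr_ge0 //; lra.
have : 0 <= (1 + x) * (P - (1 + S - T) * K) by rewrite mulr_ge0 //; lra.
nra.
Qed.

Lemma sum_gap_prod1D_le_partial (T : eqType) xs vs (J : seq T) (y d : T -> R) :
  all (>= 0) xs -> all (>= 0) vs -> allrel <=%R xs vs ->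
  all (fun j => 0 <= d j <= y j) J -> allrel (fun x j => x <= y j) xs J ->
  (1 + \sum_(x <- xs) x - \sum_(v <- vs) v - \sum_(j <- J) d j)
     * (\prod_(v <- vs) (1 + v) * \prod_(j <- J) (1 + y j))
    <= \prod_(x <- xs) (1 + x) * \prod_(j <- J) (1 + y j - d j).
Proof.
elim: J vs => [|j J IH] vs xs_ge0 vs_ge0 xs_le_vs.
  by move=> _ _; rewrite !big_nil subr0 !mulr1; apply: sum_gap_prod1D_le.
rewrite /= allrel_consr => /andP[dj_bounds dJ_bounds] /andP[xs_le_yj xs_le_yJ].
have yj_ge0 : 0 <= y j by case/andP: dj_bounds => ? ?; lra.
have yvs_ge0 : all (>= 0) (y j :: vs) by rewrite /= yj_ge0.
have xs_le_yvs : allrel <=%R xs (y j :: vs) by rewrite allrel_consr xs_le_yj.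
have IH0 := IH vs xs_ge0 vs_ge0 xs_le_vs dJ_bounds xs_le_yJ.
have IHy := IH _ xs_ge0 yvs_ge0 xs_le_yvs dJ_bounds xs_le_yJ.
move: IH0 IHy; rewrite !big_cons.
set X := \sum_(_ <- xs) _; set V := \sum_(_ <- vs) _; set D := \sum_(_ <- J) _.
set PX := \prod_(_ <- xs) _; set PV := \prod_(_ <- vs) _.
set PY := \prod_(_ <- J) (1 + y _); set PYD := \prod_(_ <- J) _ => IH0 IHy.
rewrite -subr_ge0.
have -> : PX * ((1 + y j - d j) * PYD) - (1 + X - V - (d j + D)) * (PV * ((1 + y j) * PY))
    = (1 + y j) * (PX * PYD - (1 + X - V - D) * (PV * PY))
      + ((1 + y j) * PV * PY - PX * PYD) * d j by ring.
apply: affine_ge0_interval dj_bounds _ _; first by rewrite mulr_ge0 //; lra.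
have -> : (1 + y j) * (PX * PYD - (1 + X - V - D) * (PV * PY))
      + ((1 + y j) * PV * PY - PX * PYD) * y j
    = PX * PYD - (1 + X - (y j + V) - D) * ((1 + y j) * PV * PY) by ring.
by rewrite subr_ge0.
Qed.

End ProductBounds.

Theorem proposition5p6 (m : nat) (e b : nat -> int) (b0 : int)
  (he1 : forall i : nat, (1 <= i <= m)%N -> 1 <= e i)
  (hmono : forall i j : nat, (1 <= i)%N -> (i <= j)%N -> (j <= m)%N -> e i <= e j)
  (hb : forall i : nat, (1 <= i <= m)%N -> 0 <= b i <= e i - 1)
  (hb0 : 1 <= b0) :
  forall k : nat, (k < m)%N ->
    \prod_(1 <= i < m.+1) (e i - b i) >=
    (\sum_(1 <= i < k.+2) (e i - b i) - (k%:Z - 1) - b0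
       - \sum_(k.+2 <= i < m.+1) b i) * \prod_(k.+2 <= i < m.+1) e i.
Proof.
move=> k km.
have hbI i : i \in index_iota 1 k.+2 -> 0 <= b i <= e i - 1.
  by rewrite mem_index_iota => /andP[i1 i2]; apply: hb; rewrite i1 -ltnS (leq_trans i2).
have hbJ j : j \in index_iota k.+2 m.+1 -> 0 <= b j <= e j - 1.
  by rewrite mem_index_iota => /andP[j1 j2]; apply: hb; rewrite (leq_trans _ j1).
have := @sum_gap_prod1D_le_partial _ _ [seq e i - b i - 1 | i <- index_iota 1 k.+2]
  [::] (index_iota k.+2 m.+1) (fun j => e j - 1) b.
rewrite !big_map !big_nil subr0 mul1r.
have prod_1D_subr1 (r : seq nat) (F : nat -> int) :
    \prod_(i <- r) (1 + (F i - 1)) = \prod_(i <- r) F i.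
  by apply: eq_bigr => i _; rewrite addrC subrK.
have prod_1D_subr1B (r : seq nat) (F G : nat -> int) :
    \prod_(i <- r) (1 + (F i - 1) - G i) = \prod_(i <- r) (F i - G i).
  by apply: eq_bigr => i _; rewrite addrCA subrr addr0.
rewrite !prod_1D_subr1 prod_1D_subr1B.
rewrite sumrB sumr_const_nat [\prod_(1 <= i < m.+1) _](@big_cat_nat _ _ _ k.+2) //.
have prod_e_ge0 : 0 <= \prod_(k.+2 <= j < m.+1) e j.
  rewrite big_seq; apply: prodr_ge0 => j /hbJ; lra.
move=> key; apply: le_trans (key _ _ _ _ _) => //.
- by apply: ler_wpM2r => //; rewrite subn1 natz -[k.+1]addn1 PoszD; lra.
- by apply/allP => _ /mapP[i /hbI bi ->] /=; lra.
- by rewrite allrel0r.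
- by apply/allP => j /hbJ /=.
- rewrite allrel_mapl; apply/allrelP => i j /[dup] iI; rewrite !mem_index_iota.
  move=> /andP[i1 i2] /andP[j1 j2]; have := hbI i iI.
  have := hmono i j i1 (ltnW (leq_trans i2 j1)) j2; lra.
Qed.
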